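(* Let $(q_k,p_{k1},p_{k2})_{k\ge2}$ be real numbers with $q_k>0$, $p_{k1}\ge0$, $p_{k2}>0$ and $q_k+p_{k1}+p_{k2}=1$ for all $k\ge2$. Suppose that $a_k\to a>0$ and $b_k\to b>0$ as $k\to\infty$ and that $\varrho_k$ is monotone in $k\ge N_0$ for some $N_0$. Then both $D_X(n)$ and $D_Y(n)$ are monotone in $n>N_0$, and there exist constants $0<c_7<c_8<\infty$ such that for all $n>m\ge1$, $$c_7D_X(m)\le F_X(m)\le c_8D_X(m),\quad c_7D_Y(m)\le F_Y(m)\le c_8D_Y(m),\quad c_7D_Y(m,n)\le F_Y(m,n)\le c_8D_Y(m,n).$$
   Context: For $k\ge2$, $a_k=(p_{k1}+p_{k2})/q_k$, $b_k=p_{k2}/q_k$, $A_k=\begin{pmatrix}a_k&b_k\\1&0\end{pmatrix}$, $\varrho_k=\frac{a_k+\sqrt{a_k^2+4b_k}}{2}$; $\mathbf e_1=(1,0)$, $^t$ is transpose, empty products are the identity. $D_X(n)=1+\sum_{j=n+1}^\infty\prod_{i=n+1}^j\varrho_i$, $D_Y(n)=1+\sum_{j=n+1}^\infty\prod_{i=n+1}^j\varrho_i^{-1}$, and for $1\le m<n$, $D_Y(m,n)=1+\sum_{j=m+1}^{n-1}\prod_{i=m+1}^j\varrho_i^{-1}$. For $n>m\ge1$, $F_X(m,n)=1+\sum_{s=m+1}^{n-1}\mathbf e_1A_s\cdots A_{m+1}\mathbf e_1^t$ and $F_X(m)=\lim_{n\to\infty}F_X(m,n)$. For $2\le k\le n$,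 $\zeta_{k,n}=\frac{\mathbf e_1A_{k+1}\cdots A_n\mathbf e_1^t}{\mathbf e_1A_k\cdots A_n\mathbf e_1^t}$ and $\zeta_k=\lim_{n\to\infty}\zeta_{k,n}$ (which exists under the hypotheses); $F_Y(m,n)=1+\sum_{j=m+1}^{n-1}\prod_{i=m+1}^j\zeta_i$ and $F_Y(m)=\lim_{n\to\infty}F_Y(m,n)$. All these limits are monotone limits in $[1,\infty]$. *)

From HB Require Import structures.
From mathcomp Require Import all_boot all_order all_algebra.
From mathcomp Require Import all_classical all_reals all_analysis.

Set Implicit Arguments.
Unset Strict Implicit.
Unset Printing Implicit Defensive.

Import Order.TTheory GRing.Theory Num.Theory.
Import numFieldNormedType.Exports.
Local Open Scope ring_scope.

(* Sequences q, p1, p2 : nat -> R; only indices k >= 2 are meaningful. *)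

Definition ak (R : realType) (q p1 p2 : nat -> R) (k : nat) : R :=
  (p1 k + p2 k) / q k.

Definition bk (R : realType) (q p1 p2 : nat -> R) (k : nat) : R :=
  p2 k / q k.

(* A_k = [[a_k, b_k], [1, 0]] *)
Definition Amat (R : realType) (q p1 p2 : nat -> R) (k : nat) : 'M[R]_2 :=
  \matrix_(i < 2, j < 2)
    (if nat_of_ord i == 0%N then (if nat_of_ord j == 0%N then ak q p1 p2 k else bk q p1 p2 k)
     else (if nat_of_ord j == 0%N then 1 else 0)).

Definition rho (R : realType) (q p1 p2 : nat -> R) (k : nat) : R :=
  (ak q p1 p2 k + Num.sqrt (ak q p1 p2 k ^+ 2 + 4 * bk q p1 p2 k)) / 2.

Definition DX (R : realType) (q p1 p2 : nat -> R) (n : nat) : \bar R :=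
  (1 + \sum_(n.+1 <= j <oo) (\prod_(n.+1 <= i < j.+1) rho q p1 p2 i)%:E)%E.

Definition DY (R : realType) (q p1 p2 : nat -> R) (n : nat) : \bar R :=
  (1 + \sum_(n.+1 <= j <oo) (\prod_(n.+1 <= i < j.+1) (rho q p1 p2 i)^-1)%:E)%E.

Definition DYmn (R : realType) (q p1 p2 : nat -> R) (m n : nat) : R :=
  1 + \sum_(m.+1 <= j < n) \prod_(m.+1 <= i < j.+1) (rho q p1 p2 i)^-1.

Definition prodA_desc (R : realType) (q p1 p2 : nat -> R) (m s : nat) : 'M[R]_2 :=
  \prod_(i <- rev (index_iota m.+1 s.+1)) Amat q p1 p2 i.

Definition prodA_asc (R : realType) (q p1 p2 : nat -> R) (k n : nat) : 'M[R]_2 :=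
  \prod_(k <= i < n.+1) Amat q p1 p2 i.

Definition FXmn (R : realType) (q p1 p2 : nat -> R) (m n : nat) : R :=
  1 + \sum_(m.+1 <= s < n) prodA_desc q p1 p2 m s ord0 ord0.

Definition FX (R : realType) (q p1 p2 : nat -> R) (m : nat) : \bar R :=
  limn (fun n => (FXmn q p1 p2 m n)%:E).

Definition zetakn (R : realType) (q p1 p2 : nat -> R) (k n : nat) : R :=
  prodA_asc q p1 p2 k.+1 n ord0 ord0 / prodA_asc q p1 p2 k n ord0 ord0.

Definition zeta (R : realType) (q p1 p2 : nat -> R) (k : nat) : R :=
  limn (zetakn q p1 p2 k).

Definition FYmn (R : realType) (q p1 p2 : nat -> R) (m n : nat) : R :=
  1 + \sum_(m.+1 <= j < n) \prod_(m.+1 <= i < j.+1) zeta q p1 p2 i.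

Definition FY (R : realType) (q p1 p2 : nat -> R) (m : nat) : \bar R :=
  limn (fun n => (FYmn q p1 p2 m n)%:E).

(* rho_k is the positive fixed point of the map f_k(x) = a_k + b_k / x.  The
   ratios of consecutive entries e1 A_s ... A_(m+1) e1^t are the iterates of the
   f_k run forwards from k = m + 1, and zeta_(k,n) is the inverse of the iterate
   run backwards from n down to k.  On [A0, +oo) every f_k contracts the distance
   |ln x - ln y| by lam = B1 / (A0^2 + B1) < 1, so the log-error e_j between the
   j-th iterate and rho at the same index obeys
   e_(j+1) <= lam e_j + |ln rho_(k+1) - ln rho_k|.  As rho is bounded and
   eventually monotone, ln rho has bounded variation, hence sum_j e_j is bounded
   uniformly and each product in F_X, F_Y lies within a factor exp(+-S) of the
   matching product of rho_i or rho_i^-1.  The same contraction makes the backward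
   iterates Cauchy in n, so zeta_k exists. *)

From HB Require Import structures.
From mathcomp Require Import all_boot all_order all_algebra.
From mathcomp Require Import all_classical all_reals all_analysis.
From mathcomp Require Import ring lra zify.

Set Implicit Arguments.
Unset Strict Implicit.
Unset Printing Implicit Defensive.

Import Order.TTheory GRing.Theory Num.Theory.
Import numFieldNormedType.Exports.
Local Open Scope classical_set_scope.
Local Open Scope ring_scope.

Section RealFacts.
Variable R : realType.

Lemma ln_conv_ge (c t : R) : 0 <= c -> c <= 1 -> 0 < t ->
  c * ln t <= ln (c * t + (1 - c)).
Proof.
move=> c0 c1 t0.
have := @concave_ln R (Itv01 c0 c1) t 1 t0 ltr01.
by rewrite !convRE /= ln1 mulr0 addr0 mulr1.
Qed.

(* With [t = x / y] and [c = al y / (al y + be)], the ratio of the two values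
   is [t / (c t + 1 - c)], so concavity of [ln] gives the factor [1 - c]. *)
Lemma ln_add_div_lipschitz (A0 B al be x y : R) :
  0 < A0 -> A0 <= al -> 0 < be -> be <= B -> A0 <= x -> A0 <= y ->
  `|ln (al + be / x) - ln (al + be / y)| <= B / (A0 ^+ 2 + B) * `|ln x - ln y|.
Proof.
move=> A0_gt0 A0_le_al be_gt0 be_le_B.
wlog le_yx : x y / y <= x.
  move=> wlog_le A0x A0y; have [/wlog_le|/ltW/wlog_le] := leP y x; first exact.
  by move=> /(_ A0y A0x); rewrite distrC (distrC (ln x)).
move=> A0x A0y.
have [x_gt0 y_gt0 al_gt0] : [/\ 0 < x, 0 < y & 0 < al].
  by split; apply: lt_le_trans A0_gt0 _.
have fx_gt0 : 0 < al + be / x by rewrite addr_gt0 ?divr_gt0.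
have fy_gt0 : 0 < al + be / y by rewrite addr_gt0 ?divr_gt0.
set t := x / y; set c := al * y / (al * y + be).
have t_gt0 : 0 < t by rewrite divr_gt0.
have den_gt0 : 0 < al * y + be by rewrite addr_gt0 ?mulr_gt0.
have c_ge0 : 0 <= c by rewrite divr_ge0 ?mulr_ge0 ?ltW.
have c_lt1 : c < 1 by rewrite ltr_pdivrMr // mul1r ltrDl.
have ct_gt0 : 0 < c * t + (1 - c).
  by have := mulr_ge0 c_ge0 (ltW t_gt0); lra.
have ratio : (al + be / y) / (al + be / x) = t / (c * t + (1 - c)).
  rewrite /t /c; field; rewrite addrAC subrr add0r.
  by rewrite !gt_eqF ?addr_gt0 ?mulr_gt0.
have ln_t : ln x - ln y = ln t by rewrite /t ln_div ?posrE.
have ln_t_ge0 : 0 <= ln t by rewrite -ln_t subr_ge0 ler_ln ?posrE.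
have le_f : al + be / x <= al + be / y.
  by rewrite lerD2l ler_pM2l // lef_pV2 ?posrE.
rewrite distrC ger0_norm ?subr_ge0 ?ler_ln ?posrE // ln_t ger0_norm //.
rewrite -ln_div ?posrE // ratio ln_div ?posrE //.
have one_subc : 1 - c = be / (al * y + be) by rewrite /c; field; rewrite gt_eqF.
have one_subc_le : 1 - c <= B / (A0 ^+ 2 + B).
  rewrite one_subc ler_pdivrMr // mulrAC ler_pdivlMr ?addr_gt0 ?exprn_gt0 //;
    last by apply: lt_le_trans be_le_B.
  have sq_le : A0 ^+ 2 <= al * y by rewrite expr2 ler_pM ?(ltW A0_gt0).
  have B_ge0 : 0 <= B by apply: le_trans be_le_B; apply: ltW.
  have := ler_wpM2r (sqr_ge0 A0) be_le_B; have := ler_wpM2l B_ge0 sq_le.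
  rewrite !mulrDr; lra.
have := ln_conv_ge c_ge0 (ltW c_lt1) t_gt0; have := ler_wpM2r ln_t_ge0 one_subc_le.
lra.
Qed.

Lemma sum_le_of_contracting (e v : nat -> R) (lam : R) (N : nat) :
  0 <= lam -> (forall j, 0 <= e j) ->
  (forall j, (j < N)%N -> e j.+1 <= lam * e j + v j) ->
  (1 - lam) * \sum_(0 <= j < N.+1) e j <= e 0%N + \sum_(0 <= j < N) v j.
Proof.
move=> lam_ge0 e_ge0 e_rec.
have tail : \sum_(0 <= j < N) e j.+1 <= lam * \sum_(0 <= j < N) e j + \sum_(0 <= j < N) v j.
  by rewrite mulr_sumr -big_split; apply: ler_sum_nat => j /andP[_ /e_rec].
have init : \sum_(0 <= j < N) e j <= \sum_(0 <= j < N.+1) e j.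
  by rewrite big_nat_recr //= lerDl.
rewrite [X in _ * X]big_nat_recl //.
have := ler_wpM2l lam_ge0 init; rewrite big_nat_recl // in init *; lra.
Qed.

Lemma variation_le_of_monotone (x : nat -> R) (K N : nat) (E : R) :
  (forall k l, (K <= k)%N -> (K <= l)%N -> `|x k - x l| <= E) ->
  (forall k l, (N <= k <= l)%N -> x k <= x l) \/
  (forall k l, (N <= k <= l)%N -> x l <= x k) ->
  forall i j, (K <= i)%N -> \sum_(i <= k < j) `|x k.+1 - x k| <= E * N.+1%:R.
Proof.
move=> osc mono i j Ki.
wlog incr : x osc {mono} / forall k l, (N <= k <= l)%N -> x k <= x l.
  move=> wlog_incr; case: mono => [incr|decr]; first exact: wlog_incr osc incr.
  rewrite (eq_bigr (fun k => `|(- x) k.+1 - (- x) k|)) => [|k _]; last first.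
    by rewrite /= -opprD normrN.
  apply: wlog_incr => [k l Kk Kl|k l /decr]; last by rewrite lerN2.
  by rewrite -opprD normrN; apply: osc.
have E_ge0 : 0 <= E by apply: le_trans (osc K K _ _).
have [ji|ij] := leqP j i; first by rewrite big_geq // mulr_ge0.
set p := maxn i N; set q := maxn j p.
apply: (@le_trans _ _ (\sum_(i <= k < q) `|x k.+1 - x k|)).
  by rewrite (big_cat_nat (ltnW ij) (leq_maxl j p)) /= lerDl sumr_ge0.
rewrite (big_cat_nat (leq_maxl i N) (leq_maxr j p)) /= -natr1 mulrDr mulr1.
apply: lerD.
  apply: le_trans (_ : \sum_(i <= k < p) E <= _).
    by apply: ler_sum_nat => k /andP[ik _]; apply: osc; lia.
  by rewrite sumr_const_nat -[E *+ _]mulr_natr ler_wpM2l // ler_nat; lia.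
rewrite (eq_big_nat _ _ (F2 := fun k => x k.+1 - x k)); last first.
  by move=> k /andP[pk _]; rewrite ger0_norm // subr_ge0 incr //; lia.
rewrite telescope_sumr ?leq_maxr //.
by apply: le_trans (ler_norm _) _; apply: osc; lia.
Qed.

Lemma sum_nat_rev (F : nat -> R) (i0 n : nat) :
  \sum_(i0 <= i < n) F i = \sum_(0 <= d < n - i0) F (n - d.+1)%N.
Proof.
rewrite big_nat_rev -{1}[i0]add0n big_addn.
by apply: eq_bigr => d _; congr F; lia.
Qed.

Lemma prod_bounds_of_ln_close (x y : nat -> R) (i j : nat) (S : R) :
  (forall k, (i <= k < j)%N -> 0 < x k) -> (forall k, (i <= k < j)%N -> 0 < y k) ->
  \sum_(i <= k < j) `|ln (x k) - ln (y k)| <= S ->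
  expR (- S) * \prod_(i <= k < j) y k <= \prod_(i <= k < j) x k /\
  \prod_(i <= k < j) x k <= expR S * \prod_(i <= k < j) y k.
Proof.
move=> x_gt0 y_gt0 close.
have prod_expR (z : nat -> R) : (forall k, (i <= k < j)%N -> 0 < z k) ->
    \prod_(i <= k < j) z k = expR (\sum_(i <= k < j) ln (z k)).
  by move=> z_gt0; rewrite expR_sum; apply: eq_big_nat => k /z_gt0 zk; rewrite lnK.
set D := \sum_(i <= k < j) (ln (x k) - ln (y k)).
have : `|D| <= S by apply: le_trans (ler_norm_sum _ _ _) close.
rewrite ler_norml => /andP[leD Dle].
have -> : \prod_(i <= k < j) x k = expR D * \prod_(i <= k < j) y k.
  by rewrite (prod_expR x) // (prod_expR y) // -expRD /D sumrB subrK.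
have Py_ge0 : 0 <= \prod_(i <= k < j) y k.
  by rewrite (prod_expR y) // expR_ge0.
by split; apply: ler_wpM2r; rewrite // ler_expR.
Qed.

Lemma cvgn_geometric_cauchy (u : nat -> R) (C lam : R) : `|lam| < 1 ->
  (forall n n', (n <= n')%N -> `|u n - u n'| <= C * lam ^+ n) -> cvgn u.
Proof.
move=> lam_lt1 close; apply: cauchy_cvg; apply: cauchy_exP => e e_gt0.
have [N _ small] : \forall n \near \oo, geometric C lam n < e.
  exact: (cvgr_lt 0 (cvg_geometric C lam_lt1)).
exists (u N), N => // n /= Nn; rewrite -ball_normE /=.
exact: le_lt_trans (close _ _ Nn) (small _ (leqnn N)).
Qed.

Lemma cvgn_ubound (u : nat -> R) : cvgn u -> exists M, forall k, u k <= M.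
Proof.
move=> /cvg_seq_bounded [M [_ M_bound]]; exists (M + 1) => k.
by apply: le_trans (ler_norm _) _; apply: M_bound; rewrite ?ltrDl.
Qed.

Lemma cvgn_pos_lbound (u : nat -> R) (l : R) (K : nat) : 0 < l -> u @ \oo --> l ->
  (forall k, (K <= k)%N -> 0 < u k) -> exists2 c, 0 < c & forall k, (K <= k)%N -> c <= u k.
Proof.
move=> l_gt0 ul u_gt0.
have [M M_bound] : exists M, forall k, (u k)^-1 <= M.
  by apply: cvgn_ubound; apply/cvg_ex; exists l^-1; apply: cvgV; rewrite ?gt_eqF.
have M_gt0 : 0 < M by apply: lt_le_trans (M_bound K); rewrite invr_gt0 u_gt0.
exists M^-1 => [|k Kk]; first by rewrite invr_gt0.
by rewrite -(invrK (u k)) lef_pV2 ?posrE ?invr_gt0 ?u_gt0.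
Qed.

Lemma cvgn_prod_nat (F : nat -> nat -> R) (L : nat -> R) (i0 i1 : nat) :
  (forall i, (i0 <= i < i1)%N -> F i @ \oo --> L i) ->
  (fun n => \prod_(i0 <= i < i1) F i n) @ \oo --> \prod_(i0 <= i < i1) L i.
Proof.
move=> FL; rewrite big_seq_cond; under eq_fun do rewrite big_seq_cond.
apply: cvg_big => [|i /andP[+ _]]; first exact: mul_continuous.
by rewrite mem_index_iota; apply: FL.
Qed.

Lemma one_add_sum_bounds (f g : nat -> R) (lo hi : R) (n0 n : nat) :
  (forall j, (n0 <= j)%N -> lo * g j <= f j /\ f j <= hi * g j) -> lo <= 1 -> 1 <= hi ->
  lo * (1 + \sum_(n0 <= j < n) g j) <= 1 + \sum_(n0 <= j < n) f j /\
  1 + \sum_(n0 <= j < n) f j <= hi * (1 + \sum_(n0 <= j < n) g j).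
Proof.
move=> fg lo_le1 hi_ge1.
have lo_sum : lo * \sum_(n0 <= j < n) g j <= \sum_(n0 <= j < n) f j.
  by rewrite mulr_sumr; apply: ler_sum_nat => j /andP[/fg[]].
have hi_sum : \sum_(n0 <= j < n) f j <= hi * \sum_(n0 <= j < n) g j.
  by rewrite mulr_sumr; apply: ler_sum_nat => j /andP[/fg[]].
rewrite !mulrDr !mulr1; split; lra.
Qed.

Lemma one_add_nneseries_lim (g : nat -> R) (n0 : nat) : (forall j, (n0 <= j)%N -> 0 <= g j) ->
  (1 + \sum_(n0 <= j <oo) (g j)%:E)%E = limn (fun n => (1 + \sum_(n0 <= j < n) g j)%:E).
Proof.
move=> g_ge0.
have -> : (fun n => (1 + \sum_(n0 <= j < n) g j)%:E) =
    (fun _ => 1%E) \+ (fun n => \sum_(n0 <= j < n) (g j)%:E)%E.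
  by apply: funext => n /=; rewrite EFinD sumEFin.
rewrite limeD ?lim_cst ?fin_num_adde_defr //.
  exact: cvg_cst.
by apply: is_cvg_nneseries_cond => j nj _; rewrite lee_fin g_ge0.
Qed.

Lemma one_add_series_bounds (f g : nat -> R) (lo hi : R) (n0 : nat) :
  (forall j, (n0 <= j)%N -> 0 <= g j) ->
  (forall j, (n0 <= j)%N -> lo * g j <= f j /\ f j <= hi * g j) ->
  0 <= lo -> lo <= 1 -> 1 <= hi ->
  (lo%:E * (1 + \sum_(n0 <= j <oo) (g j)%:E) <=
     limn (fun n => (1 + \sum_(n0 <= j < n) f j)%:E))%E /\
  (limn (fun n => (1 + \sum_(n0 <= j < n) f j)%:E) <=
     hi%:E * (1 + \sum_(n0 <= j <oo) (g j)%:E))%E.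
Proof.
move=> g_ge0 fg lo_ge0 lo_le1 hi_ge1.
have f_ge0 j : (n0 <= j)%N -> 0 <= f j.
  by move=> /[dup] /g_ge0 gj /fg[+ _]; apply: le_trans; rewrite mulr_ge0.
have partial_cvg (h : nat -> R) : (forall j, (n0 <= j)%N -> 0 <= h j) ->
    cvgn (fun n => (1 + \sum_(n0 <= j < n) h j)%:E).
  move=> h_ge0; apply: ereal_nondecreasing_is_cvgn => n n' nn'.
  by rewrite lee_fin lerD2l (nondecreasing_series (fun j nj _ => h_ge0 j nj)).
have cvgF := partial_cvg f f_ge0; have cvgG := partial_cvg g g_ge0.
rewrite one_add_nneseries_lim // -!limeMl //.
have bounds := one_add_sum_bounds _ fg lo_le1 hi_ge1.
split; apply: lee_lim => //; try exact: (is_cvgeMl _ cvgG);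
  by near=> n; rewrite -EFinM lee_fin; case: (bounds n).
Unshelve. all: by end_near.
Qed.

Lemma series_shifted_prod_le (f : nat -> R) (n n' : nat) : (1 <= n)%N -> (1 <= n')%N ->
  (forall k, (2 <= k)%N -> 0 < f k) -> (forall t, f (t + n.+1)%N <= f (t + n'.+1)%N) ->
  (1 + \sum_(n.+1 <= j <oo) (\prod_(n.+1 <= i < j.+1) f i)%:E <=
   1 + \sum_(n'.+1 <= j <oo) (\prod_(n'.+1 <= i < j.+1) f i)%:E)%E.
Proof.
move=> n_ge1 n'_ge1 f_gt0 f_le.
have shift p : (1 <= p)%N ->
    (\sum_(p.+1 <= j <oo) (\prod_(p.+1 <= i < j.+1) f i)%:E =
     \sum_(0 <= j <oo) (\prod_(0 <= t < j.+1) f (t + p.+1)%N)%:E)%E.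
  move=> p_ge1; rewrite -nneseries_addn => [|j]; last first.
    rewrite lee_fin big_seq_cond prodr_ge0 // => i /andP[+ _].
    by rewrite mem_index_iota => /andP[pi _]; apply/ltW/f_gt0; lia.
  apply: eq_eseriesr => j _; congr (_%:E).
  by rewrite (big_addn 0 _ p.+1) (_ : ((j + p.+1).+1 - p.+1 = j.+1)%N) //; lia.
rewrite (shift n) // (shift n') //; apply: leeD2l; apply: lee_nneseries => [j _ _|j _].
  by rewrite lee_fin prodr_ge0 // => t _; apply/ltW/f_gt0; lia.
by rewrite lee_fin ler_prod // => t _; rewrite ltW ?f_gt0 ?f_le //; lia.
Qed.

End RealFacts.

Section ContinuedFraction.
Variables (R : realType) (q p1 p2 : nat -> R).
Local Notation a := (ak q p1 p2).
Local Notation b := (bk q p1 p2).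
Local Notation rh := (rho q p1 p2).
Local Notation A := (Amat q p1 p2).

Lemma rho_gt0 k : 0 < a k -> 0 <= b k -> 0 < rh k.
Proof. by move=> ak_gt0 bk_ge0; rewrite /rho divr_gt0 // ltr_pwDl ?sqrtr_ge0. Qed.

Lemma rho_fixed k : 0 < a k -> 0 <= b k -> rh k = a k + b k / rh k.
Proof.
move=> ak_gt0 bk_ge0; have rk_gt0 := rho_gt0 ak_gt0 bk_ge0.
apply: (mulIf (lt0r_neq0 rk_gt0)); rewrite mulrDl divfK ?lt0r_neq0 //.
have disc_ge0 : 0 <= a k ^+ 2 + 4 * b k by rewrite addr_ge0 ?sqr_ge0 // mulr_ge0.
rewrite /rho; have := sqr_sqrtr disc_ge0; set s := Num.sqrt _ => s2.
have -> : b k = (s ^+ 2 - a k ^+ 2) / 4 by rewrite s2; field.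
by field.
Qed.

(* For the identity matrix [colratio 1 = 1 / 0 = 0], so [colratio_Amat_mul] also
   covers the first factor of a matrix product. *)
Definition colratio (M : 'M[R]_2) : R := M ord0 ord0 / M 1 ord0.

Lemma Amat_mul00 k (M : 'M[R]_2) :
  (A k * M) ord0 ord0 = a k * M ord0 ord0 + b k * M 1 ord0.
Proof.
rewrite -mulmxE mxE big_ord_recl big_ord1 !mxE /=.
by congr (_ + _ * M _ _); apply/val_inj.
Qed.

Lemma Amat_mul10 k (M : 'M[R]_2) : (A k * M) 1 ord0 = M ord0 ord0.
Proof. by rewrite -mulmxE mxE big_ord_recl big_ord1 !mxE /= mul1r mul0r addr0. Qed.

Lemma colratio_Amat_mul k (M : 'M[R]_2) : M ord0 ord0 != 0 ->
  colratio (A k * M) = a k + b k / colratio M.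
Proof. by move=> M00; rewrite /colratio Amat_mul00 Amat_mul10 invf_div; field. Qed.

Lemma Amat_mul00_colratio k (M : 'M[R]_2) : M ord0 ord0 != 0 ->
  (A k * M) ord0 ord0 = colratio (A k * M) * M ord0 ord0.
Proof. by move=> M00; rewrite /colratio Amat_mul10 divfK. Qed.

Lemma prodA_desc_id m : prodA_desc q p1 p2 m m = 1.
Proof. by rewrite /prodA_desc /index_iota subnn big_nil. Qed.

Lemma prodA_desc_rec m s : (m <= s)%N ->
  prodA_desc q p1 p2 m s.+1 = A s.+1 * prodA_desc q p1 p2 m s.
Proof.
move=> ms; rewrite /prodA_desc /index_iota (_ : (s.+2 - m.+1 = (s.+1 - m.+1) + 1)%N); last lia.
by rewrite iotaD rev_cat big_cons (_ : (m.+1 + (s.+1 - m.+1) = s.+1)%N) //; lia.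
Qed.

Lemma prodA_asc_id n : prodA_asc q p1 p2 n.+1 n = 1.
Proof. by rewrite /prodA_asc big_geq. Qed.

Lemma prodA_asc_rec k n : (k <= n)%N ->
  prodA_asc q p1 p2 k n = A k * prodA_asc q p1 p2 k.+1 n.
Proof. by move=> kn; rewrite /prodA_asc big_nat_recl // big_add1. Qed.

Lemma zetakn_colratio k n : (k <= n)%N ->
  zetakn q p1 p2 k n = (colratio (prodA_asc q p1 p2 k n))^-1.
Proof. by move=> kn; rewrite /colratio invf_div [in X in X / _]prodA_asc_rec ?Amat_mul10. Qed.

Variables A0 A1 B1 : R.
Hypothesis A0_gt0 : 0 < A0.
Hypothesis a_ge : forall k, (2 <= k)%N -> A0 <= a k.
Hypothesis a_le : forall k, (2 <= k)%N -> a k <= A1.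
Hypothesis b_gt0 : forall k, (2 <= k)%N -> 0 < b k.
Hypothesis b_le : forall k, (2 <= k)%N -> b k <= B1.

Let rmax := A1 + B1 / A0.
Let lam := B1 / (A0 ^+ 2 + B1).
Let span := ln rmax - ln A0.

Lemma B1_gt0 : 0 < B1.
Proof. exact: lt_le_trans (b_gt0 (leqnn 2)) (b_le (leqnn 2)). Qed.

Lemma fraction_step_mem k x : (2 <= k)%N -> A0 <= x -> A0 <= a k + b k / x <= rmax.
Proof.
move=> k2 A0x; have x_gt0 : 0 < x by apply: lt_le_trans A0x.
have bx_ge0 : 0 <= b k / x by rewrite divr_ge0 ?ltW ?b_gt0.
have bx_le : b k / x <= B1 / A0.
  apply: le_trans (_ : B1 / x <= _); first by rewrite ler_pM2r ?invr_gt0 ?b_le.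
  by rewrite ler_pM2l ?B1_gt0 // lef_pV2 ?posrE.
by apply/andP; split; have := a_ge k2; have := a_le k2; rewrite /rmax; lra.
Qed.

Lemma rho_mem k : (2 <= k)%N -> A0 <= rh k <= rmax.
Proof.
move=> k2; have ak_gt0 := lt_le_trans A0_gt0 (a_ge k2); have bk_ge0 := ltW (b_gt0 k2).
have rk := rho_fixed ak_gt0 bk_ge0.
have rho_ge_A0 : A0 <= rh k.
  rewrite rk; apply: le_trans (a_ge k2) _.
  by rewrite lerDl divr_ge0 // ltW // rho_gt0.
by rewrite rk fraction_step_mem.
Qed.

Lemma rho_pos k : (2 <= k)%N -> 0 < rh k.
Proof. by move=> /rho_mem/andP[A0r _]; apply: lt_le_trans A0r. Qed.

Lemma lam_ge0 : 0 <= lam.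
Proof. by rewrite divr_ge0 // ltW // ?addr_gt0 ?exprn_gt0 // B1_gt0. Qed.

Lemma lam_lt1 : lam < 1.
Proof.
have := B1_gt0; have : 0 < A0 ^+ 2 by rewrite exprn_gt0.
by move=> A0sq B1pos; rewrite /lam ltr_pdivrMr ?addr_gt0 //; lra.
Qed.

Lemma ln_dist_le_span x y : A0 <= x <= rmax -> A0 <= y <= rmax -> `|ln x - ln y| <= span.
Proof.
move=> /andP[A0x xR] /andP[A0y yR].
have [x_gt0 y_gt0] : 0 < x /\ 0 < y by split; apply: lt_le_trans A0_gt0 _.
have rmax_gt0 : 0 < rmax by apply: lt_le_trans xR.
have ln_mem z : 0 < z -> A0 <= z -> z <= rmax -> ln A0 <= ln z <= ln rmax.
  by move=> z_gt0 A0z zR; rewrite !ler_ln ?posrE ?A0z.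
move: (ln_mem x x_gt0 A0x xR) (ln_mem y y_gt0 A0y yR) => /andP[? ?] /andP[? ?].
by rewrite /span ler_norml; apply/andP; split; lra.
Qed.

Lemma span_ge0 : 0 <= span.
Proof. by apply: le_trans (ln_dist_le_span (rho_mem (leqnn 2)) (rho_mem (leqnn 2))). Qed.

Lemma fraction_step_contract k x y : (2 <= k)%N -> A0 <= x -> A0 <= y ->
  `|ln (a k + b k / x) - ln (a k + b k / y)| <= lam * `|ln x - ln y|.
Proof. by move=> k2; apply: ln_add_div_lipschitz; rewrite ?a_ge ?b_gt0 ?b_le. Qed.

Lemma ln_rho_variation_le N0 :
  (forall k l, (2 <= k)%N -> (N0 <= k)%N -> (k <= l)%N -> rh k <= rh l) \/
  (forall k l, (2 <= k)%N -> (N0 <= k)%N -> (k <= l)%N -> rh l <= rh k) ->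
  forall i j, (2 <= i)%N ->
    \sum_(i <= k < j) `|ln (rh k.+1) - ln (rh k)| <= span * (maxn N0 2).+1%:R.
Proof.
move=> mono; apply: (variation_le_of_monotone (x := fun k => ln (rh k))).
  by move=> k l k2 l2; apply: ln_dist_le_span; apply: rho_mem.
by case: mono => mono; [left|right] => k l /andP[Nk kl];
  rewrite ler_ln ?posrE ?rho_pos ?mono //; lia.
Qed.

Fixpoint cf (s : nat -> nat) (j : nat) : R :=
  if j is j'.+1 then a (s j'.+1) + b (s j'.+1) / cf s j' else a (s 0%N).

Lemma cf_mem s j : (forall i, (i <= j)%N -> (2 <= s i)%N) -> A0 <= cf s j <= rmax.
Proof.
elim: j => [|j IH] s2 /=.
  have k2 := s2 0%N (leqnn 0).
  rewrite a_ge // (le_trans (a_le k2)) // /rmax lerDl divr_ge0 ?(ltW B1_gt0) //.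
  exact: ltW.
rewrite fraction_step_mem ?s2 //.
by case/andP: (IH (fun i ij => s2 i (leqW ij))).
Qed.

Lemma cf_gt0 s j : (forall i, (i <= j)%N -> (2 <= s i)%N) -> 0 < cf s j.
Proof. by move=> /cf_mem/andP[A0cf _]; apply: lt_le_trans A0cf. Qed.

Lemma cf_ln_err_sum s N : (forall i, (i <= N)%N -> (2 <= s i)%N) ->
  (1 - lam) * \sum_(0 <= j < N.+1) `|ln (cf s j) - ln (rh (s j))| <=
  span + \sum_(0 <= j < N) `|ln (rh (s j.+1)) - ln (rh (s j))|.
Proof.
move=> s2.
apply: le_trans (@sum_le_of_contracting _ (fun j => `|ln (cf s j) - ln (rh (s j))|)
  (fun j => `|ln (rh (s j.+1)) - ln (rh (s j))|) _ _ lam_ge0 _ _) _ => [j|j jN /=|].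
- exact: normr_ge0.
- have [sj2 sj'2] : (2 <= s j)%N /\ (2 <= s j.+1)%N by split; apply: s2; lia.
  have [A0cf _] := andP (cf_mem (fun i ij => s2 i (leq_trans ij (ltnW jN)))).
  have [A0rho _] := andP (rho_mem sj'2).
  have ak_gt0 := lt_le_trans A0_gt0 (a_ge sj'2).
  rewrite {1}(rho_fixed ak_gt0 (ltW (b_gt0 sj'2))).
  apply: le_trans (fraction_step_contract sj'2 A0cf A0rho) _.
  have tri : `|ln (cf s j) - ln (rh (s j.+1))| <=
      `|ln (cf s j) - ln (rh (s j))| + `|ln (rh (s j.+1)) - ln (rh (s j))|.
    by rewrite [X in _ <= _ + X]distrC -[X in `|X|](subrKA (ln (rh (s j)))) ler_normD.
  have := ler_wpM2l lam_ge0 tri; have := lam_lt1; have := lam_ge0.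
  have := normr_ge0 (ln (rh (s j.+1)) - ln (rh (s j))); nra.
- rewrite lerD2r; apply: ln_dist_le_span; [apply: cf_mem => i i0 | apply: rho_mem];
    apply: s2; lia.
Qed.

Lemma cf_ln_shift_close s s' t d :
  (forall i, (i <= d)%N -> (2 <= s i)%N) -> (forall i, (i <= t + d)%N -> (2 <= s' i)%N) ->
  (forall i, (1 <= i <= d)%N -> s' (t + i)%N = s i) ->
  `|ln (cf s d) - ln (cf s' (t + d))| <= span * lam ^+ d.
Proof.
elim: d => [|d IH] s2 s'2 ss'.
  by rewrite expr0 mulr1 addn0; apply: ln_dist_le_span; apply: cf_mem => i i0;
    [apply: s2 | apply: s'2]; lia.
rewrite addnS in s'2 *; rewrite /= -addnS ss' ?leqnn //.
have sd2 : (2 <= s d.+1)%N by apply: s2.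
have [A0cf _] := andP (cf_mem (s := s) (j := d) (fun i id => s2 i (leqW id))).
have [A0cf' _] := andP (cf_mem (s := s') (j := t + d) (fun i id => s'2 i (leqW id))).
apply: le_trans (fraction_step_contract sd2 A0cf A0cf') _.
rewrite exprS mulrCA ler_wpM2l ?lam_ge0 // IH // => [i id|i id|i /andP[i1 id]].
- by apply: s2; lia.
- by apply: s'2; lia.
- by apply: ss'; lia.
Qed.

Local Notation fwd m := (fun j => (m.+1 + j)%N).
Local Notation bwd n := (fun d => (n - d)%N).

Lemma prod_cf_fwd_gt0 m j : (1 <= m)%N -> 0 < \prod_(0 <= i < j) cf (fwd m) i.
Proof.
move=> m1; rewrite big_seq_cond prodr_gt0 // => i _.
by apply: cf_gt0 => i' _; rewrite addSn ltnS (leq_trans m1) ?leq_addr.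
Qed.

Lemma prodA_desc00 m j : (1 <= m)%N ->
  prodA_desc q p1 p2 m (m + j) ord0 ord0 = \prod_(0 <= i < j) cf (fwd m) i.
Proof.
move=> m1.
suff [] : prodA_desc q p1 p2 m (m + j) ord0 ord0 = \prod_(0 <= i < j) cf (fwd m) i /\
  colratio (prodA_desc q p1 p2 m (m + j).+1) = cf (fwd m) j by [].
elim: j => [|j [IH00 IHratio]].
  rewrite addn0 big_geq // prodA_desc_rec // prodA_desc_id colratio_Amat_mul;
    last by rewrite mxE oner_neq0.
  by rewrite /colratio !mxE /= mul1r !invr0 mulr0 addr0 addn0.
have Pd_gt0 : 0 < prodA_desc q p1 p2 m (m + j) ord0 ord0 by rewrite IH00 prod_cf_fwd_gt0.
have cf_pos : 0 < cf (fwd m) j by apply: cf_gt0 => i _; lia.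
have step00 : prodA_desc q p1 p2 m (m + j.+1) ord0 ord0 =
    cf (fwd m) j * prodA_desc q p1 p2 m (m + j) ord0 ord0.
  by rewrite addnS prodA_desc_rec ?leq_addr // Amat_mul00_colratio ?gt_eqF //
    -prodA_desc_rec ?leq_addr // IHratio.
split; first by rewrite step00 IH00 big_nat_recr //= mulrC.
rewrite prodA_desc_rec ?leq_addr // colratio_Amat_mul;
  last by rewrite step00 mulf_neq0 ?gt_eqF.
by rewrite addnS IHratio /= addSn addnS.
Qed.

Lemma colratio_prodA_asc n d : (d + 2 <= n)%N ->
  colratio (prodA_asc q p1 p2 (n - d) n) = cf (bwd n) d.
Proof.
suff : (d + 2 <= n)%N -> colratio (prodA_asc q p1 p2 (n - d) n) = cf (bwd n) d /\
  0 < prodA_asc q p1 p2 (n - d) n ord0 ord0 by move=> /[apply] [[]].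
elim: d => [|d IH] dn.
  rewrite subn0 prodA_asc_rec // prodA_asc_id Amat_mul00 colratio_Amat_mul !mxE /=;
    last by rewrite oner_neq0.
  rewrite /colratio !mxE /= mul1r !invr0 !mulr0 !addr0 mulr1 subn0; split => //.
  by rewrite (lt_le_trans A0_gt0) ?a_ge.
have [IHratio IH00] := IH (leqW dn).
have e : (n - d.+1).+1 = (n - d)%N by lia.
have cf_pos : 0 < cf (bwd n) d.+1 by apply: cf_gt0 => i id; lia.
rewrite prodA_asc_rec; last lia.
rewrite e Amat_mul00_colratio ?lt0r_neq0 // colratio_Amat_mul ?lt0r_neq0 // IHratio.
by split => //; rewrite mulr_gt0.
Qed.

Lemma zetakn_cf k n : (2 <= k)%N -> (k <= n)%N -> zetakn q p1 p2 k n = (cf (bwd n) (n - k))^-1.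
Proof.
by move=> k2 kn; rewrite zetakn_colratio // -{1}(subKn kn) colratio_prodA_asc //; lia.
Qed.

Lemma zetakn_cvg k : (2 <= k)%N -> zetakn q p1 p2 k @ \oo --> zeta q p1 p2 k.
Proof.
move=> k2; set u := fun p => ln (cf (bwd (k + p)) p).
have u_cvg : cvgn u.
  apply: (@cvgn_geometric_cauchy _ _ span lam); first by rewrite ger0_norm ?lam_ge0 ?lam_lt1.
  move=> p p' pp'; rewrite /u -(subnK pp') addnC.
  apply: cf_ln_shift_close => [i ip|i ip|i /andP[_ ip]]; lia.
have zetakn_u p : zetakn q p1 p2 k (p + k) = expR (- u p).
  rewrite zetakn_cf ?leq_addl // addnK addnC expRN lnK // posrE.
  by apply: cf_gt0 => i ip; lia.
have shifted : (fun p => zetakn q p1 p2 k (p + k)) @ \oo --> expR (- limn u).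
  rewrite (funext zetakn_u).
  by apply: (@continuous_cvg _ _ _ _ _ (fun p => - u p)); [exact: continuous_expR | exact: cvgN].
by apply/cvg_ex; exists (expR (- limn u)); rewrite -(cvg_shiftn k).
Qed.

Section Variation.
Variable V : R.
Hypothesis rho_var :
  forall i j, (2 <= i)%N -> \sum_(i <= k < j) `|ln (rh k.+1) - ln (rh k)| <= V.

Let err := (span + V) / (1 - lam).

Lemma cf_fwd_ln_err m N : (1 <= m)%N ->
  \sum_(0 <= j < N.+1) `|ln (cf (fwd m) j) - ln (rh (m.+1 + j))| <= err.
Proof.
move=> m1; rewrite ler_pdivlMr ?subr_gt0 ?lam_lt1 // mulrC.
apply: le_trans (cf_ln_err_sum (s := fwd m) (N := N) _) _ => [i _|]; first lia.
rewrite lerD2l; apply: le_trans _ (@rho_var m.+1 (m.+1 + N) m1).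
rewrite (big_addn 0 _ m.+1) addKn.
by apply: ler_sum => j _; rewrite addnS (addnC j).
Qed.

Lemma cf_bwd_ln_err n i0 : (2 <= i0)%N -> (i0 <= n)%N ->
  \sum_(i0 <= i < n.+1) `|ln (cf (bwd n) (n - i)) - ln (rh i)| <= err.
Proof.
move=> i02 i0n; rewrite ler_pdivlMr ?subr_gt0 ?lam_lt1 // mulrC sum_nat_rev.
rewrite subSn // (eq_big_nat _ _ (F2 := fun d => `|ln (cf (bwd n) d) - ln (rh (n - d))|));
  last by move=> d /andP[_ dn]; rewrite subSS subKn //; lia.
apply: le_trans (cf_ln_err_sum (s := bwd n) (N := n - i0) _) _ => [d dn|]; first lia.
rewrite lerD2l; apply: le_trans _ (@rho_var i0 n i02).
rewrite [in X in _ <= X]sum_nat_rev; apply: ler_sum_nat => d /andP[_ dn].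
by rewrite distrC /= -subSn //; lia.
Qed.

Lemma prodA_desc00_bounds m s : (1 <= m)%N -> (m < s)%N ->
  expR (- err) * \prod_(m.+1 <= i < s.+1) rh i <= prodA_desc q p1 p2 m s ord0 ord0 /\
  prodA_desc q p1 p2 m s ord0 ord0 <= expR err * \prod_(m.+1 <= i < s.+1) rh i.
Proof.
move=> m1 ms; rewrite -(subnKC (ltnW ms)) prodA_desc00 //.
have -> : \prod_(m.+1 <= i < (m + (s - m)).+1) rh i = \prod_(0 <= i < s - m) rh (m.+1 + i).
  by rewrite (big_addn 0 _ m.+1) -addSn addKn; apply: eq_bigr => i _; rewrite addnC.
apply: prod_bounds_of_ln_close => [i _|i _|]; first by apply: cf_gt0 => i' _; lia.
  by apply: rho_pos; lia.
by rewrite -(prednK (_ : 0 < s - m)%N) ?subn_gt0 //; apply: cf_fwd_ln_err.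
Qed.

Lemma prod_zetakn_bounds m J n : (1 <= m)%N -> (m < J)%N -> (J <= n)%N ->
  expR (- err) * \prod_(m.+1 <= i < J.+1) (rh i)^-1 <=
    \prod_(m.+1 <= i < J.+1) zetakn q p1 p2 i n /\
  \prod_(m.+1 <= i < J.+1) zetakn q p1 p2 i n <=
    expR err * \prod_(m.+1 <= i < J.+1) (rh i)^-1.
Proof.
move=> m1 mJ Jn.
have cf_pos i : (m.+1 <= i <= n)%N -> 0 < cf (bwd n) (n - i).
  by move=> mi; apply: cf_gt0 => d dn; lia.
rewrite (eq_big_nat _ _ (F1 := fun i => zetakn q p1 p2 i n)
  (F2 := fun i => (cf (bwd n) (n - i))^-1)) => [|i /andP[mi iJ]]; last first.
  by rewrite zetakn_cf //; lia.
apply: prod_bounds_of_ln_close => [i /andP[mi iJ]|i /andP[mi iJ]|].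
- by rewrite invr_gt0 cf_pos //; lia.
- by rewrite invr_gt0 rho_pos //; lia.
apply: le_trans (cf_bwd_ln_err (n := n) (i0 := m.+1) m1 (leq_trans mJ Jn)).
apply: le_trans (_ : _ <= \sum_(m.+1 <= i < J.+1) `|ln (cf (bwd n) (n - i)) - ln (rh i)|) _.
  apply: ler_sum_nat => i /andP[mi iJ].
  by rewrite !lnV ?posrE ?rho_pos ?cf_pos -?opprD ?normrN //; lia.
rewrite [in X in _ <= X](big_cat_nat (n := J.+1)) //= ?lerDl ?sumr_ge0 //.
by rewrite ltnS (leq_trans (ltnW mJ)).
Qed.

Lemma prod_zeta_bounds m J : (1 <= m)%N -> (m < J)%N ->
  expR (- err) * \prod_(m.+1 <= i < J.+1) (rh i)^-1 <= \prod_(m.+1 <= i < J.+1) zeta q p1 p2 i /\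
  \prod_(m.+1 <= i < J.+1) zeta q p1 p2 i <= expR err * \prod_(m.+1 <= i < J.+1) (rh i)^-1.
Proof.
move=> m1 mJ.
have prod_cvg : (fun n => \prod_(m.+1 <= i < J.+1) zetakn q p1 p2 i n) @ \oo -->
    \prod_(m.+1 <= i < J.+1) zeta q p1 p2 i.
  by apply: cvgn_prod_nat => i /andP[mi _]; apply: zetakn_cvg; lia.
have bounds := prod_zetakn_bounds m1 mJ.
rewrite -(cvg_lim (@Rhausdorff R) prod_cvg); split.
  by apply: limr_ge (cvgP _ prod_cvg) _; exists J => // n /= /bounds[].
by apply: limr_le (cvgP _ prod_cvg) _; exists J => // n /= /bounds[].
Qed.

Lemma cf_series_comparison : exists c7 c8 : R, 0 < c7 /\ c7 < c8 /\
  forall m n, (1 <= m)%N -> (m < n)%N ->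
    ((c7%:E * DX q p1 p2 m <= FX q p1 p2 m)%E /\ (FX q p1 p2 m <= c8%:E * DX q p1 p2 m)%E) /\
    ((c7%:E * DY q p1 p2 m <= FY q p1 p2 m)%E /\ (FY q p1 p2 m <= c8%:E * DY q p1 p2 m)%E) /\
    (c7 * DYmn q p1 p2 m n <= FYmn q p1 p2 m n /\ FYmn q p1 p2 m n <= c8 * DYmn q p1 p2 m n).
Proof.
have V_ge0 : 0 <= V by apply: le_trans (@rho_var 2 2 (leqnn 2)); rewrite big_geq.
have err_ge0 : 0 <= err.
  by apply: divr_ge0; [exact: addr_ge0 span_ge0 V_ge0 | rewrite subr_ge0 ltW ?lam_lt1].
have lo_le1 : expR (- err) <= 1 by rewrite -expR0 ler_expR oppr_le0.
have hi_ge1 : 1 <= expR err + 1 by rewrite lerDr expR_ge0.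
have lo_ge0 := ltW (expR_gt0 (- err)).
exists (expR (- err)), (expR err + 1); split; first exact: expR_gt0.
split; first by have := expR_gt0 err; lra.
move=> m n m1 _.
have weaken x y : 0 <= y -> x <= expR err * y -> x <= (expR err + 1) * y.
  by move=> y_ge0 /le_trans; apply; rewrite ler_wpM2r // lerDl.
have prod_ge0 (f : nat -> R) j : (forall i, (2 <= i)%N -> 0 < f i) ->
    0 <= \prod_(m.+1 <= i < j.+1) f i.
  by move=> f_gt0; rewrite big_seq_cond prodr_ge0 // => i /andP[+ _];
    rewrite mem_index_iota => /andP[mi _]; apply/ltW/f_gt0; lia.
have rho_ge0 j : 0 <= \prod_(m.+1 <= i < j.+1) rh i by apply: prod_ge0 rho_pos.
have rhoV_ge0 j : 0 <= \prod_(m.+1 <= i < j.+1) (rh i)^-1.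
  by apply: prod_ge0 => i i2; rewrite invr_gt0 rho_pos.
have X_bounds j : (m.+1 <= j)%N ->
    expR (- err) * \prod_(m.+1 <= i < j.+1) rh i <= prodA_desc q p1 p2 m j ord0 ord0 /\
    prodA_desc q p1 p2 m j ord0 ord0 <= (expR err + 1) * \prod_(m.+1 <= i < j.+1) rh i.
  by move=> /(prodA_desc00_bounds m1) [lo /(weaken _ _ (rho_ge0 j)) hi].
have Y_bounds j : (m.+1 <= j)%N ->
    expR (- err) * \prod_(m.+1 <= i < j.+1) (rh i)^-1 <= \prod_(m.+1 <= i < j.+1) zeta q p1 p2 i /\
    \prod_(m.+1 <= i < j.+1) zeta q p1 p2 i <= (expR err + 1) * \prod_(m.+1 <= i < j.+1) (rh i)^-1.
  by move=> /(prod_zeta_bounds m1) [lo /(weaken _ _ (rhoV_ge0 j)) hi].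
split; [|split].
- exact: one_add_series_bounds (fun j _ => rho_ge0 j) X_bounds lo_ge0 lo_le1 hi_ge1.
- exact: one_add_series_bounds (fun j _ => rhoV_ge0 j) Y_bounds lo_ge0 lo_le1 hi_ge1.
- exact: one_add_sum_bounds Y_bounds lo_le1 hi_ge1.
Qed.

End Variation.
End ContinuedFraction.

Theorem lemma6 (R : realType) (q p1 p2 : nat -> R) (a b : R) (N0 : nat)
  (hq : forall k, (2 <= k)%N -> 0 < q k)
  (hp1 : forall k, (2 <= k)%N -> 0 <= p1 k)
  (hp2 : forall k, (2 <= k)%N -> 0 < p2 k)
  (hsum : forall k, (2 <= k)%N -> q k + p1 k + p2 k = 1)
  (ha : 0 < a) (hb : 0 < b)
  (hak : ak q p1 p2 @ \oo --> a)
  (hbk : bk q p1 p2 @ \oo --> b)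
  (hmono : (forall k l, (2 <= k)%N -> (N0 <= k)%N -> (k <= l)%N ->
              rho q p1 p2 k <= rho q p1 p2 l) \/
           (forall k l, (2 <= k)%N -> (N0 <= k)%N -> (k <= l)%N ->
              rho q p1 p2 l <= rho q p1 p2 k)) :
  ((forall n n', (1 <= n)%N -> (N0 < n)%N -> (n <= n')%N ->
       (DX q p1 p2 n <= DX q p1 p2 n')%E) \/
   (forall n n', (1 <= n)%N -> (N0 < n)%N -> (n <= n')%N ->
       (DX q p1 p2 n' <= DX q p1 p2 n)%E)) /\
  ((forall n n', (1 <= n)%N -> (N0 < n)%N -> (n <= n')%N ->
       (DY q p1 p2 n <= DY q p1 p2 n')%E) \/
   (forall n n', (1 <= n)%N -> (N0 < n)%N -> (n <= n')%N ->
       (DY q p1 p2 n' <= DY q p1 p2 n)%E)) /\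
  exists c7 c8 : R, 0 < c7 /\ c7 < c8 /\
    forall m n, (1 <= m)%N -> (m < n)%N ->
      ((c7%:E * DX q p1 p2 m <= FX q p1 p2 m)%E /\
       (FX q p1 p2 m <= c8%:E * DX q p1 p2 m)%E) /\
      ((c7%:E * DY q p1 p2 m <= FY q p1 p2 m)%E /\
       (FY q p1 p2 m <= c8%:E * DY q p1 p2 m)%E) /\
      (c7 * DYmn q p1 p2 m n <= FYmn q p1 p2 m n /\
       FYmn q p1 p2 m n <= c8 * DYmn q p1 p2 m n).
Proof.
have b_gt0 k : (2 <= k)%N -> 0 < bk q p1 p2 k by move=> k2; rewrite divr_gt0 ?hq ?hp2.
have a_gt0 k : (2 <= k)%N -> 0 < ak q p1 p2 k.
  by move=> k2; rewrite divr_gt0 ?hq // ltr_wpDl ?hp1 ?hp2.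
have rho_pos k : (2 <= k)%N -> 0 < rho q p1 p2 k.
  by move=> k2; rewrite rho_gt0 ?a_gt0 ?ltW ?b_gt0.
have [A0 A0_gt0 a_ge] := cvgn_pos_lbound ha hak a_gt0.
have [A1 a_le] := cvgn_ubound (cvgP _ hak).
have [B1 b_le] := cvgn_ubound (cvgP _ hbk).
split; [|split].
- by case: hmono => mono; [left|right] => n n' n1 Nn nn';
    apply: series_shifted_prod_le => // [|t]; try lia; apply: mono; lia.
- case: hmono => mono; [right|left] => n n' n1 Nn nn';
    apply: (series_shifted_prod_le (f := fun k => (rho q p1 p2 k)^-1)) => // [|k k2|t];
    rewrite ?invr_gt0 ?rho_pos // ?lef_pV2 ?posrE ?rho_pos ?mono //; lia.
- have rho_var := ln_rho_variation_le A0_gt0 a_ge (fun k _ => a_le k) b_gt0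
    (fun k _ => b_le k) hmono.
  exact: (cf_series_comparison A0_gt0 a_ge (fun k _ => a_le k) b_gt0 (fun k _ => b_le k) rho_var).
Qed.
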